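(* Let $\mathbf{x}:[-1,1]^2\to\mathbb{R}^2$, $\mathbf{x}(\xi,\eta)=(x(\xi,\eta),y(\xi,\eta))$, be a sufficiently smooth ($C^2$) map whose Jacobian $\mathbf{J}=\begin{bmatrix} x_\xi & x_\eta\\ y_\xi & y_\eta\end{bmatrix}$ is nonsingular everywhere on $[-1,1]^2$. Let $F(-1,\cdot)$ and $F(\cdot,-1)$ be given differentiable functions on $[-1,1]$ (transformed Dirichlet data on the edges $\xi=-1$ and $\eta=-1$) agreeing at the corner $(-1,-1)$, and let $u_{nBC}$, $u_{nCD}$ be given differentiable Neumann data on the images of the edges $\xi=1$ and $\eta=1$. Define $S_{BC},T_{BC},S_{CD},T_{CD}$, the flags $\lambda_B,\lambda_C,\lambda_D$, the corner quantities, the polynomials $\rho_0,\rho_1,\upsilon_0,\upsilon_1,\omega_1$ and the operators $Pg$, $PF^g$ as in the context. Assume the compatibility conditions: if $\lambda_B=0$ then $F_\xi(1,-1)=T_{BC}(-1)$; if $\lambda_D=0$ then $F_\eta(-1,1)=T_{CD}(-1)$; if $\lambda_C=0$ then $T_{CD}'(1)-S_{CD}'(1)F^a_\xi(1,1)=T_{BC}'(1)-S_{BC}'(1)F^a_\eta(1,1)$. Then for every sufficiently differentiable $g:[-1,1]^2\to\mathbb{R}$, the function $V=g-Pg+PF^g$ satisfies, for all $\xi,\eta\in[-1,1]$, $V(-1,\eta)=F(-1,\eta)$, $V(\xi,-1)=F(\xi,-1)$, $$V_\xi(1,\eta)+S_{BC}(\eta)V_\eta(1,\eta)=T_{BC}(\eta),\qquad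 V_\eta(\xi,1)+S_{CD}(\xi)V_\xi(\xi,1)=T_{CD}(\xi).$$
   Context: Setting: a curved quadrilateral $ABCD$ is the image of $[-1,1]^2$ under $\mathbf{x}$, with $A=\mathbf{x}(-1,-1)$, $B=\mathbf{x}(1,-1)$, $C=\mathbf{x}(1,1)$, $D=\mathbf{x}(-1,1)$; edges $AB:\eta=-1$, $BC:\xi=1$, $CD:\eta=1$, $AD:\xi=-1$. A field $u$ is represented as $V(\xi,\eta)=u(\mathbf{x}(\xi,\eta))$; Dirichlet conditions on $AB$, $AD$ and Neumann conditions $\mathbf n\cdot\nabla u=u_{nBC}$ on $BC$ and $\mathbf n\cdot\nabla u=u_{nCD}$ on $CD$ become the stated conditions on $V$. Notation: $F(1,-1):=F(\xi,-1)|_{\xi=1}$, $F(-1,1):=F(-1,\eta)|_{\eta=1}$, $F(-1,-1)$ the common corner value, $F_\xi(1,-1):=\frac{d}{d\xi}F(\xi,-1)|_{\xi=1}$, $F_\eta(-1,1):=\frac{d}{d\eta}F(-1,\eta)|_{\eta=1}$. Edge coefficients: $S_{BC}(\eta)=-\frac{\mathbf{x}_\xi(1,\eta)\cdot\mathbf{x}_\eta(1,\eta)}{\|\mathbf{x}_\eta(1,\eta)\|^2}$ (equivalently $K_{yBC}/K_{xBC}$ with $K_{xBC}=\|\mathbf{x}_\eta(1,\eta)\|/\det\mathbf{J}(1,\eta)$, $K_{yBC}=-\mathbf{x}_\xi(1,\eta)\cdot\mathbf{x}_\eta(1,\eta)/(\|\mathbf{x}_\eta(1,\eta)\|\det\mathbf{J}(1,\eta))$),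 $T_{BC}(\eta)=u_{nBC}(\mathbf{x}(1,\eta))/K_{xBC}(\eta)$; $K_{xCD}(\xi)=-\frac{\mathbf{x}_\xi(\xi,1)\cdot\mathbf{x}_\eta(\xi,1)}{\|\mathbf{x}_\xi(\xi,1)\|\det\mathbf{J}(\xi,1)}$, $K_{yCD}(\xi)=\frac{\|\mathbf{x}_\xi(\xi,1)\|}{\det\mathbf{J}(\xi,1)}$, $S_{CD}=K_{xCD}/K_{yCD}$, $T_{CD}(\xi)=u_{nCD}(\mathbf{x}(\xi,1))/K_{yCD}(\xi)$. Flags: $\lambda_B=0$ if $\mathbf{x}_\xi(1,-1)\cdot\mathbf{x}_\eta(1,-1)=0$, else $1$; $\lambda_C=0$ if $\mathbf{x}_\xi(1,1)\cdot\mathbf{x}_\eta(1,1)=0$, else $1$; $\lambda_D=0$ if $\mathbf{x}_\xi(-1,1)\cdot\mathbf{x}_\eta(-1,1)=0$, else $1$. Any term multiplied by a flag equal to $0$ is taken to be $0$ (so quantities only defined when the flag is $1$ are never needed otherwise). Corner quantities: $F^a_\eta(1,-1)=\frac{T_{BC}(-1)-F_\xi(1,-1)}{S_{BC}(-1)}$ (if $\lambda_B=1$); $F^a_\xi(-1,1)=\frac{T_{CD}(-1)-F_\eta(-1,1)}{S_{CD}(-1)}$ (if $\lambda_D=1$); $F^a_\xi(1,1)=\frac{T_{BC}(1)-S_{BC}(1)T_{CD}(1)}{1-S_{BC}(1)S_{CD}(1)}$, $F^a_\eta(1,1)=\frac{T_{CD}(1)-S_{CD}(1)T_{BC}(1)}{1-S_{BC}(1)S_{CD}(1)}$;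 $R_C=[T_{CD}'(1)-S_{CD}'(1)F^a_\xi(1,1)]-[T_{BC}'(1)-S_{BC}'(1)F^a_\eta(1,1)]$; $F^g_{\xi\xi}(1,1)=\frac{S_{BC}(1)}{S_{CD}(1)}g_{\eta\eta}(1,1)+\frac{R_C}{S_{CD}(1)}$ (if $\lambda_C=1$); $F^g_{\xi\eta}(1,1)=T_{BC}'(1)-S_{BC}'(1)F^a_\eta(1,1)-S_{BC}(1)g_{\eta\eta}(1,1)$. Polynomials with $\phi_0(t)=\tfrac12(1-t)$, $\phi_1(t)=\tfrac12(1+t)$: $\rho_0=\phi_0^3(1+3\phi_1+6\phi_1^2)$, $\rho_1=\phi_1^3(1+3\phi_0+6\phi_0^2)$, $\upsilon_0=2\phi_0^3\phi_1(1+3\phi_1)$, $\upsilon_1=-2\phi_1^3\phi_0(1+3\phi_0)$, $\omega_1=2\phi_1^3\phi_0^2$. $F^g_\xi(1,\eta)=T_{BC}(\eta)-S_{BC}(\eta)\{g_\eta(1,\eta)-[g(1,-1)-F(1,-1)]\rho_0'(\eta)-[g_\eta(1,1)-F^a_\eta(1,1)]\upsilon_1'(\eta)-\lambda_B[g_\eta(1,-1)-F^a_\eta(1,-1)]\upsilon_0'(\eta)\}$; $F^g_\eta(\xi,1)=T_{CD}(\xi)-S_{CD}(\xi)\{g_\xi(\xi,1)-[g(-1,1)-F(-1,1)]\rho_0'(\xi)-[g_\xi(1,1)-F^a_\xi(1,1)]\upsilon_1'(\xi)-\lambda_D[g_\xi(-1,1)-F^a_\xi(-1,1)]\upsilon_0'(\xi)-\lambda_C[g_{\xi\xi}(1,1)-F^g_{\xi\xi}(1,1)]\omega_1'(\xi)\}$.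 $Pg(\xi,\eta)=g(-1,\eta)\rho_0(\xi)+g_\xi(1,\eta)\upsilon_1(\xi)+g(\xi,-1)\rho_0(\eta)+g_\eta(\xi,1)\upsilon_1(\eta)-[g(-1,-1)\rho_0(\eta)+g_\eta(-1,1)\upsilon_1(\eta)]\rho_0(\xi)-[g_\xi(1,-1)\rho_0(\eta)+g_{\xi\eta}(1,1)\upsilon_1(\eta)]\upsilon_1(\xi)+\lambda_Bg_\eta(1,-1)\upsilon_0(\eta)\rho_1(\xi)+[\lambda_Dg_\xi(-1,1)\upsilon_0(\xi)+\lambda_Cg_{\xi\xi}(1,1)\omega_1(\xi)]\rho_1(\eta)$. $PF^g(\xi,\eta)=F(-1,\eta)\rho_0(\xi)+F^g_\xi(1,\eta)\upsilon_1(\xi)+F(\xi,-1)\rho_0(\eta)+F^g_\eta(\xi,1)\upsilon_1(\eta)-[F(-1,-1)\rho_0(\eta)+F_\eta(-1,1)\upsilon_1(\eta)]\rho_0(\xi)-[F_\xi(1,-1)\rho_0(\eta)+F^g_{\xi\eta}(1,1)\upsilon_1(\eta)]\upsilon_1(\xi)+\lambda_BF^a_\eta(1,-1)\upsilon_0(\eta)\rho_1(\xi)+[\lambda_DF^a_\xi(-1,1)\upsilon_0(\xi)+\lambda_CF^g_{\xi\xi}(1,1)\omega_1(\xi)]\rho_1(\eta)$. *)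

From Stdlib Require Import Reals.
From Coquelicot Require Import Coquelicot.
Open Scope R_scope.

Definition pd1 (f : R -> R -> R) (s t : R) : R := Derive (fun s' => f s' t) s.
Definition pd2 (f : R -> R -> R) (s t : R) : R := Derive (fun t' => f s t') t.

Definition C2 (f : R -> R -> R) : Prop :=
  forall s t,
    ex_derive (fun s' => f s' t) s /\ ex_derive (fun t' => f s t') t /\
    ex_derive (fun s' => pd1 f s' t) s /\ ex_derive (fun t' => pd1 f s t') t /\
    ex_derive (fun s' => pd2 f s' t) s /\ ex_derive (fun t' => pd2 f s t') t /\
    continuity_2d_pt f s t /\
    continuity_2d_pt (pd1 f) s t /\ continuity_2d_pt (pd2 f) s t /\
    continuity_2d_pt (pd1 (pd1 f)) s t /\ continuity_2d_pt (pd2 (pd1 f)) s t /\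
    continuity_2d_pt (pd1 (pd2 f)) s t /\ continuity_2d_pt (pd2 (pd2 f)) s t.

Definition phi0 (t : R) : R := (1 - t) / 2.
Definition phi1 (t : R) : R := (1 + t) / 2.
Definition rho0 (t : R) : R := phi0 t ^ 3 * (1 + 3 * phi1 t + 6 * phi1 t ^ 2).
Definition rho1 (t : R) : R := phi1 t ^ 3 * (1 + 3 * phi0 t + 6 * phi0 t ^ 2).
Definition ups0 (t : R) : R := 2 * phi0 t ^ 3 * phi1 t * (1 + 3 * phi1 t).
Definition ups1 (t : R) : R := - 2 * phi1 t ^ 3 * phi0 t * (1 + 3 * phi0 t).
Definition omg1 (t : R) : R := 2 * phi1 t ^ 3 * phi0 t ^ 2.

Section Construction.
Variables xm ym : R -> R -> R.
(* Dirichlet data: Fl eta = F(-1,eta), Fb xi = F(xi,-1) *)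
Variables Fl Fb : R -> R.
(* Neumann data, functions of a point (X,Y) of the plane *)
Variables unBC unCD : R -> R -> R.

Definition detJ (s t : R) : R := pd1 xm s t * pd2 ym s t - pd2 xm s t * pd1 ym s t.
Definition dotJ (s t : R) : R := pd1 xm s t * pd2 xm s t + pd1 ym s t * pd2 ym s t.
Definition nxi2 (s t : R) : R := pd1 xm s t ^ 2 + pd1 ym s t ^ 2.
Definition neta2 (s t : R) : R := pd2 xm s t ^ 2 + pd2 ym s t ^ 2.

Definition S_BC (eta : R) : R := - dotJ 1 eta / neta2 1 eta.
Definition KxBC (eta : R) : R := sqrt (neta2 1 eta) / detJ 1 eta.
Definition T_BC (eta : R) : R := unBC (xm 1 eta) (ym 1 eta) / KxBC eta.
Definition KxCD (xi : R) : R := - dotJ xi 1 / (sqrt (nxi2 xi 1) * detJ xi 1).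
Definition KyCD (xi : R) : R := sqrt (nxi2 xi 1) / detJ xi 1.
Definition S_CD (xi : R) : R := KxCD xi / KyCD xi.
Definition T_CD (xi : R) : R := unCD (xm xi 1) (ym xi 1) / KyCD xi.

Definition flag (a : R) : R := if Req_dec_T a 0 then 0 else 1.
Definition lamB : R := flag (dotJ 1 (-1)).
Definition lamC : R := flag (dotJ 1 1).
Definition lamD : R := flag (dotJ (-1) 1).

Definition FaEta_B : R := (T_BC (-1) - Derive Fb 1) / S_BC (-1).
Definition FaXi_D : R := (T_CD (-1) - Derive Fl 1) / S_CD (-1).
Definition FaXi_C : R :=
  (T_BC 1 - S_BC 1 * T_CD 1) / (1 - S_BC 1 * S_CD 1).
Definition FaEta_C : R :=
  (T_CD 1 - S_CD 1 * T_BC 1) / (1 - S_BC 1 * S_CD 1).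
Definition R_C : R :=
  (Derive T_CD 1 - Derive S_CD 1 * FaXi_C) - (Derive T_BC 1 - Derive S_BC 1 * FaEta_C).

Variable g : R -> R -> R.

Definition Fg_xixi_C : R := S_BC 1 / S_CD 1 * pd2 (pd2 g) 1 1 + R_C / S_CD 1.
Definition Fg_xieta_C : R := Derive T_BC 1 - Derive S_BC 1 * FaEta_C - S_BC 1 * pd2 (pd2 g) 1 1.

Definition Fg_xi_BC (eta : R) : R :=
  T_BC eta - S_BC eta *
   (pd2 g 1 eta - (g 1 (-1) - Fb 1) * Derive rho0 eta
    - (pd2 g 1 1 - FaEta_C) * Derive ups1 eta
    - lamB * (pd2 g 1 (-1) - FaEta_B) * Derive ups0 eta).

Definition Fg_eta_CD (xi : R) : R :=
  T_CD xi - S_CD xi *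
   (pd1 g xi 1 - (g (-1) 1 - Fl 1) * Derive rho0 xi
    - (pd1 g 1 1 - FaXi_C) * Derive ups1 xi
    - lamD * (pd1 g (-1) 1 - FaXi_D) * Derive ups0 xi
    - lamC * (pd1 (pd1 g) 1 1 - Fg_xixi_C) * Derive omg1 xi).

Definition Pg (xi eta : R) : R :=
  g (-1) eta * rho0 xi + pd1 g 1 eta * ups1 xi + g xi (-1) * rho0 eta + pd2 g xi 1 * ups1 eta
  - (g (-1) (-1) * rho0 eta + pd2 g (-1) 1 * ups1 eta) * rho0 xi
  - (pd1 g 1 (-1) * rho0 eta + pd2 (pd1 g) 1 1 * ups1 eta) * ups1 xi
  + lamB * pd2 g 1 (-1) * ups0 eta * rho1 xi
  + (lamD * pd1 g (-1) 1 * ups0 xi + lamC * pd1 (pd1 g) 1 1 * omg1 xi) * rho1 eta.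

Definition PFg (xi eta : R) : R :=
  Fl eta * rho0 xi + Fg_xi_BC eta * ups1 xi + Fb xi * rho0 eta + Fg_eta_CD xi * ups1 eta
  - (Fl (-1) * rho0 eta + Derive Fl 1 * ups1 eta) * rho0 xi
  - (Derive Fb 1 * rho0 eta + Fg_xieta_C * ups1 eta) * ups1 xi
  + lamB * FaEta_B * ups0 eta * rho1 xi
  + (lamD * FaXi_D * ups0 xi + lamC * Fg_xixi_C * omg1 xi) * rho1 eta.

Definition V (xi eta : R) : R := g xi eta - Pg xi eta + PFg xi eta.

End Construction.

From Stdlib Require Import Reals Lra FunctionalExtensionality.
From Coquelicot Require Import Coquelicot.
Open Scope R_scope.

(* Pg and PF^g are two instances of one transfinite blending operator built from
   the quintic Hermite polynomials rho0, rho1, ups0, ups1, omg1.  Its trace on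
   xi = -1 (resp. eta = -1) and its xi-derivative on xi = 1 (resp. eta-derivative
   on eta = 1) reproduce the corresponding edge datum as soon as the edge data
   agree with the corner constants to first order.  For Pg this is automatic
   (using the symmetry of g_xieta at C); for PF^g it amounts to the identities
   F^g_eta(-1,1) = F_eta(-1,1), F^g_xi(1,-1) = F_xi(1,-1), F^g_xi(1,1) = F^a_xi(1,1),
   F^g_eta(1,1) = F^a_eta(1,1) and d/dxi F^g_eta(1,1) = F^g_xieta(1,1)
   = d/deta F^g_xi(1,1), which follow case by case on the flags from the
   compatibility conditions and from |x_xi . x_eta| < |x_xi| |x_eta|.  Hence
   V = g - Pg + PF^g has the Dirichlet traces F, V_xi(1,.) = F^g_xi(1,.), and
   V_eta(1,.) is exactly the braced term in F^g_xi(1,.), so the Neumann relation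
   on BC is the definition of F^g_xi; likewise on CD. *)

Definition rho0' (t : R) : R := -15 * (phi0 t * phi1 t) ^ 2.
Definition ups0' (t : R) : R := phi0 t ^ 2 * (1 + 5 * phi1 t) * (1 - 3 * phi1 t).
Definition ups1' (t : R) : R := phi1 t ^ 2 * (1 + 5 * phi0 t) * (1 - 3 * phi0 t).
Definition omg1' (t : R) : R := phi1 t ^ 2 * phi0 t * (3 * phi0 t - 2 * phi1 t).

Ltac derive_polynomial :=
  apply functional_extensionality; intro t; apply is_derive_unique;
  unfold rho0, ups0, ups1, omg1, rho0', ups0', ups1', omg1', phi0, phi1;
  auto_derive; [easy | field].

Lemma Derive_rho0 : Derive rho0 = rho0'.
Proof. derive_polynomial. Qed.
Lemma Derive_ups0 : Derive ups0 = ups0'.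
Proof. derive_polynomial. Qed.
Lemma Derive_ups1 : Derive ups1 = ups1'.
Proof. derive_polynomial. Qed.
Lemma Derive_omg1 : Derive omg1 = omg1'.
Proof. derive_polynomial. Qed.

Section Blending.

(* For Pg, (L, Rx, B, Ty) are g(-1,.), g_xi(1,.), g(.,-1), g_eta(.,1) and the
   constants are g(-1,-1), g_eta(-1,1), g_xi(1,-1), g_xieta(1,1) and the three
   flagged corner terms at B, D and C. *)
Variables L Rx B Ty : R -> R.
Variables c00 cy cx cxy cB cD cC : R.

Definition blend (xi eta : R) : R :=
  L eta * rho0 xi + Rx eta * ups1 xi + B xi * rho0 eta + Ty xi * ups1 eta
  - (c00 * rho0 eta + cy * ups1 eta) * rho0 xi
  - (cx * rho0 eta + cxy * ups1 eta) * ups1 xi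
  + cB * ups0 eta * rho1 xi
  + (cD * ups0 xi + cC * omg1 xi) * rho1 eta.

Ltac blend_ring :=
  unfold blend, rho0, rho1, ups0, ups1, omg1, phi0, phi1; field.

Lemma blend_left eta : B (-1) = c00 -> Ty (-1) = cy -> blend (-1) eta = L eta.
Proof. intros HB HTy. unfold blend. rewrite HB, HTy. blend_ring. Qed.

Lemma blend_bottom xi : L (-1) = c00 -> Rx (-1) = cx -> blend xi (-1) = B xi.
Proof. intros HL HRx. unfold blend. rewrite HL, HRx. blend_ring. Qed.

Lemma blend_right eta : blend 1 eta = B 1 * rho0 eta + Ty 1 * ups1 eta + cB * ups0 eta.
Proof. blend_ring. Qed.

Lemma is_derive_blend_right_eta eta :
  is_derive (fun t => blend 1 t) eta
    (B 1 * Derive rho0 eta + Ty 1 * Derive ups1 eta + cB * Derive ups0 eta).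
Proof.
  apply is_derive_ext with (fun t => B 1 * rho0 t + Ty 1 * ups1 t + cB * ups0 t).
  - intro t. symmetry. apply blend_right.
  - rewrite Derive_rho0, Derive_ups1, Derive_ups0.
    unfold rho0, ups1, ups0, rho0', ups1', ups0', phi0, phi1. auto_derive; [easy | field].
Qed.

Lemma blend_top xi :
  blend xi 1 = L 1 * rho0 xi + Rx 1 * ups1 xi + cD * ups0 xi + cC * omg1 xi.
Proof. blend_ring. Qed.

Lemma is_derive_blend_top_xi xi :
  is_derive (fun s => blend s 1) xi
    (L 1 * Derive rho0 xi + Rx 1 * Derive ups1 xi
     + cD * Derive ups0 xi + cC * Derive omg1 xi).
Proof.
  apply is_derive_ext with (fun s => L 1 * rho0 s + Rx 1 * ups1 s + cD * ups0 s + cC * omg1 s).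
  - intro s. symmetry. apply blend_top.
  - rewrite Derive_rho0, Derive_ups1, Derive_ups0, Derive_omg1.
    unfold rho0, ups1, ups0, omg1, rho0', ups1', ups0', omg1', phi0, phi1.
    auto_derive; [easy | field].
Qed.

Lemma is_derive_blend_right_xi eta :
  is_derive B 1 cx -> is_derive Ty 1 cxy -> is_derive (fun s => blend s eta) 1 (Rx eta).
Proof.
  intros HB HTy.
  unfold blend, rho0, rho1, ups0, ups1, omg1, phi0, phi1. auto_derive.
  - split; [exists cx | split; [exists cxy | exact I]]; assumption.
  - change (Derive (fun x => B x) 1) with (Derive B 1).
    change (Derive (fun x => Ty x) 1) with (Derive Ty 1).
    rewrite (is_derive_unique _ _ _ HB), (is_derive_unique _ _ _ HTy). field.
Qed.

Lemma is_derive_blend_top_eta xi :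
  is_derive L 1 cy -> is_derive Rx 1 cxy -> is_derive (fun t => blend xi t) 1 (Ty xi).
Proof.
  intros HL HRx.
  unfold blend, rho0, rho1, ups0, ups1, omg1, phi0, phi1. auto_derive.
  - split; [exists cy | split; [exists cxy | exact I]]; assumption.
  - change (Derive (fun x => L x) 1) with (Derive L 1).
    change (Derive (fun x => Rx x) 1) with (Derive Rx 1).
    rewrite (is_derive_unique _ _ _ HL), (is_derive_unique _ _ _ HRx). field.
Qed.

End Blending.

Section SecondOrderPartials.

Variable f : R -> R -> R.
Hypothesis Hf : C2 f.

Lemma C2_ex_derive_xi s t : ex_derive (fun s' => f s' t) s.
Proof. now destruct (Hf s t) as (H & _). Qed.

Lemma C2_ex_derive_eta s t : ex_derive (fun t' => f s t') t.
Proof. now destruct (Hf s t) as (_ & H & _). Qed.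

Lemma C2_ex_derive_pd1_xi s t : ex_derive (fun s' => pd1 f s' t) s.
Proof. now destruct (Hf s t) as (_ & _ & H & _). Qed.

Lemma C2_ex_derive_pd1_eta s t : ex_derive (fun t' => pd1 f s t') t.
Proof. now destruct (Hf s t) as (_ & _ & _ & H & _). Qed.

Lemma C2_ex_derive_pd2_xi s t : ex_derive (fun s' => pd2 f s' t) s.
Proof. now destruct (Hf s t) as (_ & _ & _ & _ & H & _). Qed.

Lemma C2_ex_derive_pd2_eta s t : ex_derive (fun t' => pd2 f s t') t.
Proof. now destruct (Hf s t) as (_ & _ & _ & _ & _ & H & _). Qed.

Lemma C2_pd_comm s t : pd2 (pd1 f) s t = pd1 (pd2 f) s t.
Proof.
  destruct (Hf s t) as (_ & _ & _ & _ & _ & _ & _ & _ & _ & _ & Hc21 & Hc12 & _).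
  symmetry. apply Schwarz; [| exact Hc12 | exact Hc21].
  exists (mkposreal 1 Rlt_0_1). intros u v _ _.
  repeat split;
    [apply C2_ex_derive_xi | apply C2_ex_derive_eta
    | apply C2_ex_derive_pd2_xi | apply C2_ex_derive_pd1_eta].
Qed.

Lemma C2_is_derive_xi s t : is_derive (fun s' => f s' t) s (pd1 f s t).
Proof. apply Derive_correct, C2_ex_derive_xi. Qed.

Lemma C2_is_derive_eta s t : is_derive (fun t' => f s t') t (pd2 f s t).
Proof. apply Derive_correct, C2_ex_derive_eta. Qed.

Lemma C2_is_derive_pd1_eta s t : is_derive (fun t' => pd1 f s t') t (pd2 (pd1 f) s t).
Proof. apply Derive_correct, C2_ex_derive_pd1_eta. Qed.

Lemma C2_is_derive_pd2_xi s t : is_derive (fun s' => pd2 f s' t) s (pd2 (pd1 f) s t).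
Proof. rewrite C2_pd_comm. apply Derive_correct, C2_ex_derive_pd2_xi. Qed.

End SecondOrderPartials.

#[local] Hint Resolve C2_ex_derive_pd1_xi C2_ex_derive_pd1_eta C2_ex_derive_pd2_xi
  C2_ex_derive_pd2_eta : core.

Lemma flag_cases a : flag a = 0 /\ a = 0 \/ flag a = 1 /\ a <> 0.
Proof. unfold flag. destruct (Req_dec_T a 0); auto. Qed.

Lemma ex_derive_div_sqrt (u p q : R -> R) x :
  ex_derive u x -> ex_derive p x -> ex_derive q x -> 0 < p x -> q x <> 0 ->
  ex_derive (fun y => u y / (sqrt (p y) / q y)) x.
Proof.
  intros Hu Hp Hq Hp0 Hq0. pose proof (sqrt_lt_R0 _ Hp0).
  auto_derive. repeat split; auto.
  unfold Rdiv. apply Rmult_integral_contrapositive_currified; [lra | now apply Rinv_neq_0_compat].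
Qed.

Section EdgeCoefficients.

Variables xm ym : R -> R -> R.

Lemma lagrange_identity s t :
  nxi2 xm ym s t * neta2 xm ym s t - dotJ xm ym s t ^ 2 = detJ xm ym s t ^ 2.
Proof. unfold nxi2, neta2, dotJ, detJ. ring. Qed.

Lemma nxi2_gt0 s t : detJ xm ym s t <> 0 -> 0 < nxi2 xm ym s t.
Proof.
  intro HJ. pose proof (lagrange_identity s t). pose proof (pow2_gt_0 _ HJ).
  assert (0 <= neta2 xm ym s t) by (unfold neta2; nra).
  assert (0 <= nxi2 xm ym s t) by (unfold nxi2; nra).
  nra.
Qed.

Lemma neta2_gt0 s t : detJ xm ym s t <> 0 -> 0 < neta2 xm ym s t.
Proof.
  intro HJ. pose proof (lagrange_identity s t). pose proof (pow2_gt_0 _ HJ).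
  assert (0 <= neta2 xm ym s t) by (unfold neta2; nra).
  assert (0 <= nxi2 xm ym s t) by (unfold nxi2; nra).
  nra.
Qed.

Lemma S_CD_eq xi :
  detJ xm ym xi 1 <> 0 -> S_CD xm ym xi = - dotJ xm ym xi 1 / nxi2 xm ym xi 1.
Proof.
  intro HJ. pose proof (nxi2_gt0 xi 1 HJ) as Hn.
  pose proof (sqrt_lt_R0 _ Hn). pose proof (sqrt_sqrt _ (Rlt_le _ _ Hn)) as Hsq.
  unfold S_CD, KxCD, KyCD. rewrite <- Hsq at 3. field. lra.
Qed.

Lemma S_BC_eq0 eta :
  detJ xm ym 1 eta <> 0 -> S_BC xm ym eta = 0 <-> dotJ xm ym 1 eta = 0.
Proof.
  intro HJ. pose proof (neta2_gt0 1 eta HJ).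
  assert (E : dotJ xm ym 1 eta = - S_BC xm ym eta * neta2 xm ym 1 eta)
    by (unfold S_BC; field; lra).
  split; intro H0; [rewrite E, H0; ring | unfold S_BC; rewrite H0; field; lra].
Qed.

Lemma S_CD_eq0 xi :
  detJ xm ym xi 1 <> 0 -> S_CD xm ym xi = 0 <-> dotJ xm ym xi 1 = 0.
Proof.
  intro HJ. pose proof (nxi2_gt0 xi 1 HJ). rewrite (S_CD_eq xi HJ).
  assert (E : dotJ xm ym xi 1 = - (- dotJ xm ym xi 1 / nxi2 xm ym xi 1) * nxi2 xm ym xi 1)
    by (field; lra).
  split; intro H0; [rewrite E, H0; ring | rewrite H0; field; lra].
Qed.

(* 1 - S_BC S_CD = (det J)^2 / (|x_xi|^2 |x_eta|^2) at C. *)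
Lemma S_BC_S_CD_neq1 : detJ xm ym 1 1 <> 0 -> 1 - S_BC xm ym 1 * S_CD xm ym 1 <> 0.
Proof.
  intro HJ. pose proof (nxi2_gt0 1 1 HJ). pose proof (neta2_gt0 1 1 HJ).
  rewrite (S_CD_eq 1 HJ). unfold S_BC.
  replace (1 - _) with (detJ xm ym 1 1 ^ 2 / (nxi2 xm ym 1 1 * neta2 xm ym 1 1))
    by (rewrite <- lagrange_identity; field; lra).
  unfold Rdiv. apply Rmult_integral_contrapositive_currified.
  - now apply pow_nonzero.
  - apply Rinv_neq_0_compat. nra.
Qed.

Hypotheses (Hx : C2 xm) (Hy : C2 ym).

Ltac metric_derive := unfold detJ, dotJ, nxi2, neta2; auto_derive; repeat split; auto.

Lemma ex_derive_S_BC eta : detJ xm ym 1 eta <> 0 -> ex_derive (S_BC xm ym) eta.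
Proof.
  intro HJ. pose proof (neta2_gt0 1 eta HJ). unfold S_BC.
  apply ex_derive_div; [metric_derive | metric_derive | lra].
Qed.

Lemma ex_derive_T_BC unBC eta :
  detJ xm ym 1 eta <> 0 -> ex_derive (fun t => unBC (xm 1 t) (ym 1 t)) eta ->
  ex_derive (T_BC xm ym unBC) eta.
Proof.
  intros HJ Hu.
  apply (ex_derive_div_sqrt _ (fun t => neta2 xm ym 1 t) (fun t => detJ xm ym 1 t));
    [exact Hu | metric_derive | metric_derive | now apply neta2_gt0 | exact HJ].
Qed.

Lemma ex_derive_T_CD unCD xi :
  detJ xm ym xi 1 <> 0 -> ex_derive (fun s => unCD (xm s 1) (ym s 1)) xi ->
  ex_derive (T_CD xm ym unCD) xi.
Proof.
  intros HJ Hu.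
  apply (ex_derive_div_sqrt _ (fun s => nxi2 xm ym s 1) (fun s => detJ xm ym s 1));
    [exact Hu | metric_derive | metric_derive | now apply nxi2_gt0 | exact HJ].
Qed.

Lemma ex_derive_S_CD xi : detJ xm ym xi 1 <> 0 -> ex_derive (S_CD xm ym) xi.
Proof.
  intro HJ. pose proof (nxi2_gt0 xi 1 HJ) as Hn. pose proof (sqrt_lt_R0 _ Hn).
  apply (ex_derive_div_sqrt _ (fun s => nxi2 xm ym s 1) (fun s => detJ xm ym s 1));
    [| metric_derive | metric_derive | assumption | exact HJ].
  unfold KxCD. auto_derive.
  repeat split; try metric_derive; try assumption.
  apply Rmult_integral_contrapositive_currified; lra.
Qed.

End EdgeCoefficients.

Ltac eta_reduce_Derive :=
  repeat match goal with |- context [Derive (fun x => ?f x) ?p] =>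
    change (Derive (fun x => f x) p) with (Derive f p) end.

Section CornerValues.

Variables xm ym : R -> R -> R.
Variables Fl Fb : R -> R.
Variables unBC unCD : R -> R -> R.
Variable g : R -> R -> R.
Hypotheses (Hx : C2 xm) (Hy : C2 ym) (Hg : C2 g).
Hypotheses (HJ_B : detJ xm ym 1 (-1) <> 0) (HJ_C : detJ xm ym 1 1 <> 0)
  (HJ_D : detJ xm ym (-1) 1 <> 0).
Hypothesis HunBC : ex_derive (fun t => unBC (xm 1 t) (ym 1 t)) 1.
Hypothesis HunCD : ex_derive (fun s => unCD (xm s 1) (ym s 1)) 1.
Hypothesis HcompB : lamB xm ym = 0 -> Derive Fb 1 = T_BC xm ym unBC (-1).
Hypothesis HcompD : lamD xm ym = 0 -> Derive Fl 1 = T_CD xm ym unCD (-1).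
Hypothesis HcompC : lamC xm ym = 0 ->
  Derive (T_CD xm ym unCD) 1 - Derive (S_CD xm ym) 1 * FaXi_C xm ym unBC unCD
  = Derive (T_BC xm ym unBC) 1 - Derive (S_BC xm ym) 1 * FaEta_C xm ym unBC unCD.

Ltac expand_polynomials :=
  rewrite ?Derive_rho0, ?Derive_ups0, ?Derive_ups1, ?Derive_omg1;
  unfold rho0', ups0', ups1', omg1', phi0, phi1.

Lemma Fg_xi_BC_bottom : Fg_xi_BC xm ym Fb unBC unCD g (-1) = Derive Fb 1.
Proof.
  unfold Fg_xi_BC. expand_polynomials.
  destruct (flag_cases (dotJ xm ym 1 (-1))) as [[Hl Hd] | [Hl Hd]];
    unfold lamB; rewrite Hl.
  - rewrite (proj2 (S_BC_eq0 xm ym (-1) HJ_B) Hd), (HcompB Hl). field.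
  - assert (HS : S_BC xm ym (-1) <> 0) by now rewrite S_BC_eq0.
    unfold FaEta_B. field. exact HS.
Qed.

Lemma Fg_eta_CD_left : Fg_eta_CD xm ym Fl unBC unCD g (-1) = Derive Fl 1.
Proof.
  unfold Fg_eta_CD. expand_polynomials.
  destruct (flag_cases (dotJ xm ym (-1) 1)) as [[Hl Hd] | [Hl Hd]];
    unfold lamD; rewrite Hl.
  - rewrite (proj2 (S_CD_eq0 xm ym (-1) HJ_D) Hd), (HcompD Hl). field.
  - assert (HS : S_CD xm ym (-1) <> 0) by now rewrite S_CD_eq0.
    unfold FaXi_D. field. exact HS.
Qed.

Lemma Fg_xi_BC_corner : Fg_xi_BC xm ym Fb unBC unCD g 1 = FaXi_C xm ym unBC unCD.
Proof.
  unfold Fg_xi_BC, FaXi_C, FaEta_C. expand_polynomials.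
  field. now apply S_BC_S_CD_neq1.
Qed.

Lemma Fg_eta_CD_corner : Fg_eta_CD xm ym Fl unBC unCD g 1 = FaEta_C xm ym unBC unCD.
Proof.
  unfold Fg_eta_CD, FaXi_C, FaEta_C. expand_polynomials.
  field. now apply S_BC_S_CD_neq1.
Qed.

Lemma is_derive_Fg_xi_BC_corner :
  is_derive (Fg_xi_BC xm ym Fb unBC unCD g) 1 (Fg_xieta_C xm ym unBC unCD g).
Proof.
  unfold Fg_xi_BC. expand_polynomials. auto_derive.
  - repeat split; auto using ex_derive_T_BC, ex_derive_S_BC.
  - unfold Fg_xieta_C. eta_reduce_Derive. unfold pd2. field.
Qed.

(* rho0, ups0, ups1 have zero second derivative at 1 and omg1''(1) = 1, so the
   xi-derivative of the braced term at C is F^g_xixi(1,1) if lamC = 1 and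
   g_xixi(1,1) otherwise, where S_CD(1) = 0. *)
Lemma is_derive_Fg_eta_CD_corner :
  is_derive (Fg_eta_CD xm ym Fl unBC unCD g) 1 (Fg_xieta_C xm ym unBC unCD g).
Proof.
  unfold Fg_eta_CD. expand_polynomials. auto_derive.
  - repeat split; auto using ex_derive_T_CD, ex_derive_S_CD.
  - unfold Fg_xieta_C. eta_reduce_Derive.
    destruct (flag_cases (dotJ xm ym 1 1)) as [[Hl Hd] | [Hl Hd]];
      unfold lamC; rewrite Hl.
    + rewrite (proj2 (S_CD_eq0 xm ym 1 HJ_C) Hd), (proj2 (S_BC_eq0 xm ym 1 HJ_C) Hd).
      assert (HT : Derive (T_CD xm ym unCD) 1 = Derive (T_BC xm ym unBC) 1
        - Derive (S_BC xm ym) 1 * FaEta_C xm ym unBC unCD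
        + Derive (S_CD xm ym) 1 * FaXi_C xm ym unBC unCD)
        by (pose proof (HcompC Hl); lra).
      rewrite HT. field.
    + assert (HS : S_CD xm ym 1 <> 0) by now rewrite S_CD_eq0.
      unfold Fg_xixi_C, R_C, pd1. field. exact HS.
Qed.

End CornerValues.

Lemma is_derive_sub_add (f p q : R -> R) (x df dp dq d : R) :
  is_derive f x df -> is_derive p x dp -> is_derive q x dq -> d = df - dp + dq ->
  is_derive (fun y => f y - p y + q y) x d.
Proof.
  intros Hf Hp Hq ->. exact (is_derive_plus _ _ _ _ _ (is_derive_minus _ _ _ _ _ Hf Hp) Hq).
Qed.

Section Solution.

Variables xm ym : R -> R -> R.
Variables Fl Fb : R -> R.
Variables unBC unCD : R -> R -> R.
Variable g : R -> R -> R.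
Hypotheses (Hx : C2 xm) (Hy : C2 ym) (Hg : C2 g).
Hypothesis HJ : forall s t, -1 <= s <= 1 -> -1 <= t <= 1 -> detJ xm ym s t <> 0.
Hypothesis HFl : forall t, -1 <= t <= 1 -> ex_derive Fl t.
Hypothesis HFb : forall s, -1 <= s <= 1 -> ex_derive Fb s.
Hypothesis Hcorner : Fl (-1) = Fb (-1).
Hypothesis HunBC : forall t, -1 <= t <= 1 -> ex_derive (fun t' => unBC (xm 1 t') (ym 1 t')) t.
Hypothesis HunCD : forall s, -1 <= s <= 1 -> ex_derive (fun s' => unCD (xm s' 1) (ym s' 1)) s.
Hypothesis HcompB : lamB xm ym = 0 -> Derive Fb 1 = T_BC xm ym unBC (-1).
Hypothesis HcompD : lamD xm ym = 0 -> Derive Fl 1 = T_CD xm ym unCD (-1).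
Hypothesis HcompC : lamC xm ym = 0 ->
  Derive (T_CD xm ym unCD) 1 - Derive (S_CD xm ym) 1 * FaXi_C xm ym unBC unCD
  = Derive (T_BC xm ym unBC) 1 - Derive (S_BC xm ym) 1 * FaEta_C xm ym unBC unCD.

Lemma Pg_blend :
  Pg xm ym g =
  blend (g (-1)) (pd1 g 1) (fun xi => g xi (-1)) (fun xi => pd2 g xi 1)
    (g (-1) (-1)) (pd2 g (-1) 1) (pd1 g 1 (-1)) (pd2 (pd1 g) 1 1)
    (lamB xm ym * pd2 g 1 (-1)) (lamD xm ym * pd1 g (-1) 1) (lamC xm ym * pd1 (pd1 g) 1 1).
Proof. reflexivity. Qed.

Lemma PFg_blend :
  PFg xm ym Fl Fb unBC unCD g =
  blend Fl (Fg_xi_BC xm ym Fb unBC unCD g) Fb (Fg_eta_CD xm ym Fl unBC unCD g)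
    (Fl (-1)) (Derive Fl 1) (Derive Fb 1) (Fg_xieta_C xm ym unBC unCD g)
    (lamB xm ym * FaEta_B xm ym Fb unBC) (lamD xm ym * FaXi_D xm ym Fl unCD)
    (lamC xm ym * Fg_xixi_C xm ym unBC unCD g).
Proof. reflexivity. Qed.

Let HJ_B : detJ xm ym 1 (-1) <> 0. Proof. apply HJ; lra. Qed.
Let HJ_C : detJ xm ym 1 1 <> 0. Proof. apply HJ; lra. Qed.
Let HJ_D : detJ xm ym (-1) 1 <> 0. Proof. apply HJ; lra. Qed.
Let HFl_C : ex_derive Fl 1. Proof. apply HFl; lra. Qed.
Let HFb_C : ex_derive Fb 1. Proof. apply HFb; lra. Qed.
Let HunBC_C : ex_derive (fun t => unBC (xm 1 t) (ym 1 t)) 1. Proof. apply HunBC; lra. Qed.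
Let HunCD_C : ex_derive (fun s => unCD (xm s 1) (ym s 1)) 1. Proof. apply HunCD; lra. Qed.

Lemma V_left eta : V xm ym Fl Fb unBC unCD g (-1) eta = Fl eta.
Proof.
  unfold V. rewrite Pg_blend, PFg_blend, !blend_left;
    [ring | symmetry; exact Hcorner | now apply Fg_eta_CD_left | reflexivity ..].
Qed.

Lemma V_bottom xi : V xm ym Fl Fb unBC unCD g xi (-1) = Fb xi.
Proof.
  unfold V. rewrite Pg_blend, PFg_blend, !blend_bottom;
    [ring | reflexivity | now apply Fg_xi_BC_bottom | reflexivity ..].
Qed.

Lemma is_derive_V_xi_right eta :
  is_derive (fun s : R => V xm ym Fl Fb unBC unCD g s eta) 1
    (Fg_xi_BC xm ym Fb unBC unCD g eta).
Proof.
  unfold V. rewrite Pg_blend, PFg_blend.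
  eapply is_derive_sub_add.
  - now apply C2_is_derive_xi.
  - apply is_derive_blend_right_xi;
      [apply C2_is_derive_xi | apply C2_is_derive_pd2_xi]; exact Hg.
  - apply is_derive_blend_right_xi.
    + now apply Derive_correct.
    + now apply is_derive_Fg_eta_CD_corner.
  - ring.
Qed.

Lemma is_derive_V_eta_right eta :
  is_derive (fun t : R => V xm ym Fl Fb unBC unCD g 1 t) eta
    (pd2 g 1 eta - (g 1 (-1) - Fb 1) * Derive rho0 eta
     - (pd2 g 1 1 - FaEta_C xm ym unBC unCD) * Derive ups1 eta
     - lamB xm ym * (pd2 g 1 (-1) - FaEta_B xm ym Fb unBC) * Derive ups0 eta).
Proof.
  unfold V. rewrite Pg_blend, PFg_blend.
  eapply is_derive_sub_add;
    [now apply C2_is_derive_eta | apply is_derive_blend_right_eta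
    | apply is_derive_blend_right_eta |].
  rewrite Fg_eta_CD_corner by assumption. ring.
Qed.

Lemma is_derive_V_eta_top xi :
  is_derive (fun t : R => V xm ym Fl Fb unBC unCD g xi t) 1
    (Fg_eta_CD xm ym Fl unBC unCD g xi).
Proof.
  unfold V. rewrite Pg_blend, PFg_blend.
  eapply is_derive_sub_add.
  - now apply C2_is_derive_eta.
  - apply is_derive_blend_top_eta;
      [apply C2_is_derive_eta | apply C2_is_derive_pd1_eta]; exact Hg.
  - apply is_derive_blend_top_eta.
    + now apply Derive_correct.
    + now apply is_derive_Fg_xi_BC_corner.
  - ring.
Qed.

Lemma is_derive_V_xi_top xi :
  is_derive (fun s : R => V xm ym Fl Fb unBC unCD g s 1) xi
    (pd1 g xi 1 - (g (-1) 1 - Fl 1) * Derive rho0 xi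
     - (pd1 g 1 1 - FaXi_C xm ym unBC unCD) * Derive ups1 xi
     - lamD xm ym * (pd1 g (-1) 1 - FaXi_D xm ym Fl unCD) * Derive ups0 xi
     - lamC xm ym * (pd1 (pd1 g) 1 1 - Fg_xixi_C xm ym unBC unCD g) * Derive omg1 xi).
Proof.
  unfold V. rewrite Pg_blend, PFg_blend.
  eapply is_derive_sub_add;
    [now apply C2_is_derive_xi | apply is_derive_blend_top_xi
    | apply is_derive_blend_top_xi |].
  rewrite Fg_xi_BC_corner by assumption. ring.
Qed.

Lemma V_neumann_BC eta :
  pd1 (V xm ym Fl Fb unBC unCD g) 1 eta
  + S_BC xm ym eta * pd2 (V xm ym Fl Fb unBC unCD g) 1 eta = T_BC xm ym unBC eta.
Proof.
  unfold pd1 at 1, pd2 at 1.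
  rewrite (is_derive_unique _ _ _ (is_derive_V_xi_right eta)),
    (is_derive_unique _ _ _ (is_derive_V_eta_right eta)).
  unfold Fg_xi_BC. ring.
Qed.

Lemma V_neumann_CD xi :
  pd2 (V xm ym Fl Fb unBC unCD g) xi 1
  + S_CD xm ym xi * pd1 (V xm ym Fl Fb unBC unCD g) xi 1 = T_CD xm ym unCD xi.
Proof.
  unfold pd1 at 1, pd2 at 1.
  rewrite (is_derive_unique _ _ _ (is_derive_V_eta_top xi)),
    (is_derive_unique _ _ _ (is_derive_V_xi_top xi)).
  unfold Fg_eta_CD. ring.
Qed.

End Solution.

Theorem mainTheorem2
  (xm ym : R -> R -> R) (Fl Fb : R -> R) (unBC unCD : R -> R -> R)
  (Hx : C2 xm) (Hy : C2 ym)
  (HJ : forall s t, -1 <= s <= 1 -> -1 <= t <= 1 -> detJ xm ym s t <> 0)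
  (HFl : forall t, -1 <= t <= 1 -> ex_derive Fl t)
  (HFb : forall s, -1 <= s <= 1 -> ex_derive Fb s)
  (Hcorner : Fl (-1) = Fb (-1))
  (HunBC : forall t, -1 <= t <= 1 -> ex_derive (fun t' => unBC (xm 1 t') (ym 1 t')) t)
  (HunCD : forall s, -1 <= s <= 1 -> ex_derive (fun s' => unCD (xm s' 1) (ym s' 1)) s)
  (HcompB : lamB xm ym = 0 -> Derive Fb 1 = T_BC xm ym unBC (-1))
  (HcompD : lamD xm ym = 0 -> Derive Fl 1 = T_CD xm ym unCD (-1))
  (HcompC : lamC xm ym = 0 ->
     Derive (T_CD xm ym unCD) 1 - Derive (S_CD xm ym) 1 * FaXi_C xm ym unBC unCD
     = Derive (T_BC xm ym unBC) 1 - Derive (S_BC xm ym) 1 * FaEta_C xm ym unBC unCD) :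
  forall g : R -> R -> R, C2 g ->
  let Vg := V xm ym Fl Fb unBC unCD g in
  (forall eta, -1 <= eta <= 1 ->
     Vg (-1) eta = Fl eta /\ Vg eta (-1) = Fb eta) /\
  (forall eta, -1 <= eta <= 1 ->
     ex_derive (fun s => Vg s eta) 1 /\ ex_derive (fun t => Vg 1 t) eta /\
     pd1 Vg 1 eta + S_BC xm ym eta * pd2 Vg 1 eta = T_BC xm ym unBC eta) /\
  (forall xi, -1 <= xi <= 1 ->
     ex_derive (fun t => Vg xi t) 1 /\ ex_derive (fun s => Vg s 1) xi /\
     pd2 Vg xi 1 + S_CD xm ym xi * pd1 Vg xi 1 = T_CD xm ym unCD xi).
Proof.
  intros g Hg. cbv zeta.
  split; [| split]; intros z Hz; repeat split.
  - now apply V_left.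
  - now apply V_bottom.
  - eexists. now apply is_derive_V_xi_right.
  - eexists. now apply is_derive_V_eta_right.
  - now apply V_neumann_BC.
  - eexists. now apply is_derive_V_eta_top.
  - eexists. now apply is_derive_V_xi_top.
  - now apply V_neumann_CD.
Qed.
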